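(* Let $n\ge3$, $2\le i\le n-1$, $\mathfrak g=\mathfrak{sp}(n,\mathbb C)$, $\mathfrak q$ of type $C_n(i)$, $\mu=\varepsilon_1+\varepsilon_{i+1}$, $\epsilon_\gamma=\varepsilon_2-\varepsilon_{i+1}$, and set $Y^*_l:=\frac{8c_0^2}{i+1}\mathrm{pr}_{\mathfrak l_\gamma\otimes\mathfrak z(\bar{\mathfrak n})}(\bar\tau_2(X_{-\mu}+X_{-\epsilon_\gamma}))$. Then $$Y^*_l=\frac{4c_0}{i+1}X_{\varepsilon_1-\varepsilon_2}\otimes X_{-2\varepsilon_1}-\frac{4c_0}{i+1}X_{-(\varepsilon_1-\varepsilon_2)}\otimes X_{-2\varepsilon_2}+\frac{2c_0}{i+1}\sum_{k=3}^iX_{-(\varepsilon_2-\varepsilon_k)}\otimes X_{-(\varepsilon_1+\varepsilon_k)}$$ $$-\frac{2c_0}{i+1}\sum_{k=3}^iX_{-(\varepsilon_1-\varepsilon_k)}\otimes X_{-(\varepsilon_2+\varepsilon_k)}-\frac{2c_0}{i+1}H_{\varepsilon_1-\varepsilon_2}\otimes X_{-(\varepsilon_1+\varepsilon_2)}.$$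
   Context: $\mathfrak g=\mathfrak{sp}(n,\mathbb C)\subset\mathfrak{gl}(2n,\mathbb C)$; $\hat j=j+n$, $E_{ab}$ matrix units. Cartan $\mathfrak h$ = matrices $\sum_jh_j(E_{jj}-E_{\hat j\hat j})$, $\varepsilon_j$ picks $h_j$. Roots $\pm\varepsilon_j\pm\varepsilon_k$ ($j<k$), $\pm2\varepsilon_j$; simple roots $\alpha_j=\varepsilon_j-\varepsilon_{j+1}$ ($j<n$), $\alpha_n=2\varepsilon_n$. Root vectors: $X_{\varepsilon_j-\varepsilon_k}=E_{jk}-E_{\hat k\hat j}$ for $j\neq k$ (so $X_{-(\varepsilon_j-\varepsilon_k)}=X_{\varepsilon_k-\varepsilon_j}$), $X_{\varepsilon_j+\varepsilon_k}=E_{j\hat k}+E_{k\hat j}$, $X_{-(\varepsilon_j+\varepsilon_k)}=E_{\hat jk}+E_{\hat kj}$, $X_{2\varepsilon_j}=E_{j\hat j}$, $X_{-2\varepsilon_j}=E_{\hat jj}$; $H_\alpha=[X_\alpha,X_{-\alpha}]$, so $H_{\varepsilon_1-\varepsilon_2}=(E_{11}-E_{\hat1\hat1})-(E_{22}-E_{\hat2\hat2})$. The Killing form is $\kappa=c_0\mathrm{Tr}(XY)$, $c_0>0$ constant. $\mathfrak q=\mathfrak l\oplus\mathfrak n$ is the standard maximal parabolic subalgebra determined by $\alpha_i$; grading $\mathfrak g=\bigoplus_{j=-2}^2\mathfrak g(j)$ by the $\alpha_i$-coefficient, $\mathfrak l=\mathfrak g(0)$, $\mathfrak z(\bar{\mathfrak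 n})=\mathfrak g(-2)$ (roots $-(\varepsilon_j+\varepsilon_k)$, $j<k\le i$, and $-2\varepsilon_j$, $j\le i$), $\mathfrak g(-1)$ has roots $-(\varepsilon_j\pm\varepsilon_k)$, $j\le i<k$. $\mathfrak l=\mathfrak z(\mathfrak l)\oplus\mathfrak l_\gamma\oplus\mathfrak l_{n\gamma}$ with $\mathfrak l_\gamma\cong\mathfrak{sl}(i,\mathbb C)$ (simple roots $\alpha_1,\dots,\alpha_{i-1}$), $\mathfrak l_{n\gamma}\cong\mathfrak{sp}(n-i,\mathbb C)$ (simple roots $\alpha_{i+1},\dots,\alpha_n$), $\mathfrak z(\mathfrak l)$ the center; $\mathrm{pr}_{\mathfrak l_\gamma\otimes\mathfrak z(\bar{\mathfrak n})}$ is the projection along this decomposition. $\bar\omega=\frac1{c_0}\sum_{j=1}^iX_{2\varepsilon_j}\otimes X_{-2\varepsilon_j}+\frac1{2c_0}\sum_{1\le j<k\le i}X_{\varepsilon_j+\varepsilon_k}\otimes X_{-(\varepsilon_j+\varepsilon_k)}$, $\bar\tau_2(Y)=\tfrac12(\mathrm{ad}(Y)^2\otimes\mathrm{Id})\bar\omega$ for $Y\in\mathfrak g(-1)$. *)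

From HB Require Import structures.
From mathcomp Require Import all_boot all_order all_algebra.
From mathcomp Require Import algC.
Set Implicit Arguments. Unset Strict Implicit. Unset Printing Implicit Defensive.
Import Order.TTheory GRing.Theory Num.Theory.
Local Open Scope ring_scope.

(* sp(n,C) inside gl(2n,C), with C = algC.  Matrices of size n+n, rows and
   columns indexed 0..2n-1.  Paper indices j in 1..n correspond to position
   j-1, and the hatted index \hat j = j+n to position n+j-1. *)

Section SpDefs.
Variable n : nat.
Local Notation N := (n + n)%N.
Local Notation M := 'M[algC]_N.

Definition Eu (a b : nat) : M :=
  \matrix_(r, c) ((val r == a) && (val c == b))%:R.

Definition pos (j : nat) : nat := j.-1.
Definition hpos (j : nat) : nat := (n + j.-1)%N.

(* X_{eps_j - eps_k} = E_{jk} - E_{\hat k \hat j}  (j <> k) *)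
Definition Xd (j k : nat) : M := Eu (pos j) (pos k) - Eu (hpos k) (hpos j).
(* X_{eps_j + eps_k} = E_{j \hat k} + E_{k \hat j} *)
Definition Xp (j k : nat) : M := Eu (pos j) (hpos k) + Eu (pos k) (hpos j).
(* X_{-(eps_j + eps_k)} = E_{\hat j k} + E_{\hat k j} *)
Definition Xnp (j k : nat) : M := Eu (hpos j) (pos k) + Eu (hpos k) (pos j).
(* X_{2 eps_j} = E_{j \hat j},  X_{-2 eps_j} = E_{\hat j j} *)
Definition X2 (j : nat) : M := Eu (pos j) (hpos j).
Definition Xm2 (j : nat) : M := Eu (hpos j) (pos j).

(* H_alpha = [X_alpha, X_{-alpha}] for alpha = eps_j - eps_k *)
Definition Hd (j k : nat) : M := Xd j k *m Xd k j - Xd k j *m Xd j k.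
(* Cartan element E_{jj} - E_{\hat j \hat j} (the element dual to eps_j) *)
Definition hc (j : nat) : M := Eu (pos j) (pos j) - Eu (hpos j) (hpos j).

Definition ad (Y A : M) : M := Y *m A - A *m Y.

(* Tensors in gl(2n) (x) gl(2n): T = sum A (x) B is encoded as the N x N
   matrix of matrices whose (r,c) entry is sum B r c *: A (an isomorphism
   gl(2n) (x) gl(2n) ~ M_N(M_N)).  For linear f, (f (x) Id) is map_mx f. *)
Definition tensor := 'M['M[algC]_N]_N.
Definition tens (A B : M) : tensor := \matrix_(r, c) (B r c *: A).
Definition tscale (a : algC) (T : tensor) : tensor := map_mx (fun A => a *: A) T.
Definition tmapl (f : M -> M) (T : tensor) : tensor := map_mx f T.

Definition omegabar (i : nat) (c0 : algC) : tensor :=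
  tscale (c0^-1) (\sum_(1 <= j < i.+1) tens (X2 j) (Xm2 j))
  + tscale ((2 * c0)^-1)
      (\sum_(1 <= j < i.+1) \sum_(j.+1 <= k < i.+1) tens (Xp j k) (Xnp j k)).

Definition tau2bar (i : nat) (c0 : algC) (Y : M) : tensor :=
  tscale (2^-1) (tmapl (fun A => ad Y (ad Y A)) (omegabar i c0)).

(* p is the projection of g = sp(n) onto l_gamma = sl(i) along
   g = z(l) (+) l_gamma (+) l_ngamma (+) (+)_{j <> 0} g(j), the grading being
   by the alpha_i-coefficient.  It is specified as a linear map on gl(2n)
   by its values on a basis of sp(n) adapted to this decomposition. *)
Definition is_pr_lgamma (i : nat) (p : M -> M) : Prop :=
  linear p /\
   (* l_gamma: identity on H_{alpha_j} (1 <= j < i) and on X_{eps_j - eps_k},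
      j <> k <= i *)
   (forall j, (1 <= j < i)%N -> p (Hd j j.+1) = Hd j j.+1) /\
   (forall j k, (1 <= j <= i)%N -> (1 <= k <= i)%N -> j != k ->
       p (Xd j k) = Xd j k) /\
   (* z(l): spanned by sum_{j <= i} (E_jj - E_{\hat j \hat j}) *)
   p (\sum_(1 <= j < i.+1) hc j) = 0 /\
   (* l_ngamma = sp(n-i) on the indices i+1..n *)
   (forall k, (i < k <= n)%N -> p (hc k) = 0) /\
   (forall j k, (i < j <= n)%N -> (i < k <= n)%N -> j != k -> p (Xd j k) = 0) /\
   (forall j k, (i < j < k)%N -> (k <= n)%N -> p (Xp j k) = 0 /\ p (Xnp j k) = 0) /\
   (forall j, (i < j <= n)%N -> p (X2 j) = 0 /\ p (Xm2 j) = 0) /\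
   (* g(+-1): roots +-(eps_j - eps_k), +-(eps_j + eps_k), j <= i < k *)
   (forall j k, (1 <= j <= i)%N -> (i < k <= n)%N ->
      p (Xd j k) = 0 /\ p (Xd k j) = 0 /\ p (Xp j k) = 0 /\ p (Xnp j k) = 0) /\
   (* g(+-2): roots +-(eps_j + eps_k), j < k <= i, and +-2 eps_j, j <= i *)
   (forall j k, (1 <= j < k)%N -> (k <= i)%N -> p (Xp j k) = 0 /\ p (Xnp j k) = 0) /\
   (forall j, (1 <= j <= i)%N -> p (X2 j) = 0 /\ p (Xm2 j) = 0).

End SpDefs.

(** By linearity only ad(Y)^2 of the root vectors X_{2e_j} (j <= i) and
    X_{e_j+e_k} (j < k <= i) occurring in omega-bar matters.  Since
    Y = X_{-mu} + X_{-eps_gamma} only involves the indices 1, 2 and i+1,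
    ad(Y) kills those whose indices are all >= 3.  The remaining brackets
    are computed in matrix units; their parts at the index i+1 (the vectors
    X_{+-2e_{i+1}} of sp(n-i) and the Cartan element E_{i+1,i+1} - E_{^i+1,^i+1})
    are killed by the projection onto l_gamma, which leaves the stated terms. *)

From HB Require Import structures.
From mathcomp Require Import all_boot all_order all_algebra.
From mathcomp Require Import algC zify ring.
Import Order.TTheory GRing.Theory Num.Theory.
Local Open Scope ring_scope.

Lemma mul_Eu n a b c d :
  Eu n a b *m Eu n c d = ((b == c) && (b < n + n)%N)%:R *: Eu n a d.
Proof.
apply/matrixP => r s; rewrite !mxE.
case: (ltnP b (n + n)) => [b_lt | b_ge]; last first.
  rewrite andbF mul0r big1 // => k _; rewrite !mxE.
  have -> : (val k == b) = false.
    by apply/negbTE/eqP => kb; move: (ltn_ord k); rewrite kb; lia.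
  by rewrite andbF mul0r.
rewrite (bigD1 (Ordinal b_lt)) //= big1 ?addr0 => [|k k_neq]; rewrite !mxE /=.
  by rewrite eqxx andbT; case: (r == a :> nat); case: (b == c); case: (s == d :> nat);
    rewrite ?mulr1 ?mulr0 ?mul0r.
have -> : (val k == b) = false.
  by apply/negbTE; apply: contra k_neq => /eqP kb; apply/eqP/val_inj.
by rewrite andbF mul0r.
Qed.

Ltac decide_nat_test :=
  match goal with
  | |- context [(?x == ?y :> nat)] =>
      first [ rewrite (_ : (x == y) = true); last by apply/eqP; lia
            | rewrite (_ : (x == y) = false); last by apply/negbTE/eqP; lia ]
  | |- context [(?x <= ?y)%N] =>
      first [ rewrite (_ : (x <= y)%N = true); last by lia
            | rewrite (_ : (x <= y)%N = false); last by apply/negbTE; lia ]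
  end.

Ltac split_on_index :=
  match goal with
  | |- context [(?x == ?y :> nat)] => is_var x; case: eqP => ?; [subst x|]
  end.

Ltac unit_calc :=
  rewrite /Hd /ad /Xnp /Xd /X2 /Xm2 /Xp /hc /pos /hpos;
  repeat progress rewrite ?mulmxDl ?mulmxDr ?mulmxBl ?mulmxBr ?mulmxN ?mulNmx
    -?scalemxAl -?scalemxAr ?mulmxA ?mulr2n ?mul_Eu ?scalerA ?scalerN ?scalerDr ?scalerBr;
  repeat decide_nat_test;
  rewrite /= ?mulr0 ?mul0r ?mulr1 ?mul1r ?scale0r ?scale1r ?oppr0 ?addr0 ?add0r
    ?subr0 ?sub0r ?opprK;
  apply/matrixP => ? ?; rewrite !mxE;
  match goal with r : 'I_ _, s : 'I_ _ |- _ =>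
    move: (nat_of_ord r) (nat_of_ord s) => ? ? end;
  repeat first [decide_nat_test | split_on_index]; rewrite /=; ring.

Section Brackets.
Variables n i : nat.
Hypotheses (i_ge2 : (2 <= i)%N) (i_lt_n : (i < n)%N).
Let Y := Xnp n 1 i.+1 + Xd n i.+1 2.

Lemma ad2_X2_1 : ad Y (ad Y (X2 n 1)) = Xd n 1 2 - Xm2 n i.+1 *+ 2.
Proof. by rewrite /Y; unit_calc. Qed.

Lemma ad2_X2_2 : ad Y (ad Y (X2 n 2)) = X2 n i.+1 *+ 2 - Xd n 2 1.
Proof. by rewrite /Y; unit_calc. Qed.

Lemma ad_X2_high j : (3 <= j <= i)%N -> ad Y (X2 n j) = 0.
Proof. by case/andP=> j_ge3 j_le_i; rewrite /Y; unit_calc. Qed.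

Lemma ad2_Xp_12 : ad Y (ad Y (Xp n 1 2)) = - Hd n 1 2 - hc n i.+1 *+ 2.
Proof. by rewrite /Y; unit_calc. Qed.

Lemma ad2_Xp_1k k : (3 <= k <= i)%N -> ad Y (ad Y (Xp n 1 k)) = Xd n k 2.
Proof. by case/andP=> k_ge3 k_le_i; rewrite /Y; unit_calc. Qed.

Lemma ad2_Xp_2k k : (3 <= k <= i)%N -> ad Y (ad Y (Xp n 2 k)) = - Xd n k 1.
Proof. by case/andP=> k_ge3 k_le_i; rewrite /Y; unit_calc. Qed.

Lemma ad_Xp_high j k : (3 <= j)%N -> (j < k <= i)%N -> ad Y (Xp n j k) = 0.
Proof. by move=> j_ge3 /andP[j_lt_k k_le_i]; rewrite /Y; unit_calc. Qed.

End Brackets.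

Lemma ad_is_linear n (Y : 'M[algC]_(n + n)) : linear (ad Y).
Proof.
move=> a u v; rewrite /ad mulmxDr mulmxDl -scalemxAr -scalemxAl.
by rewrite scalerBr addrACA opprD.
Qed.

HB.instance Definition _ n (Y : 'M[algC]_(n + n)) :=
  GRing.isLinear.Build algC _ _ _ (@ad n Y) (@ad_is_linear n Y).

Section Tensors.
Variable n : nat.
Local Notation M := 'M[algC]_(n + n).

Lemma tens0l (B : M) : tens 0 B = 0.
Proof. by apply/matrixP => r c; rewrite !mxE scaler0. Qed.

Lemma tensNl (A B : M) : tens (- A) B = - tens A B.
Proof. by apply/matrixP => r c; rewrite !mxE scalerN. Qed.

Lemma tmapl_comp (f g : M -> M) (T : tensor n) :
  tmapl f (tmapl g T) = tmapl (fun A => f (g A)) T.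
Proof. by apply/matrixP => r c; rewrite !mxE. Qed.

Variable f : {linear M -> M}.

Lemma tmaplD (S T : tensor n) : tmapl f (S + T) = tmapl f S + tmapl f T.
Proof. exact: map_mxD. Qed.

Lemma tmapl_sum I (r : seq I) (P : pred I) (F : I -> tensor n) :
  tmapl f (\sum_(j <- r | P j) F j) = \sum_(j <- r | P j) tmapl f (F j).
Proof. exact: map_mx_sum. Qed.

Lemma tmapl_tens (A B : M) : tmapl f (tens A B) = tens (f A) B.
Proof. by apply/matrixP => r c; rewrite !mxE linearZ. Qed.

Lemma tmapl_tscale a (T : tensor n) : tmapl f (tscale a T) = tscale a (tmapl f T).
Proof. by apply/matrixP => r c; rewrite !mxE linearZ. Qed.

Lemma tmapl_omegabar i c0 :
  tmapl f (omegabar n i c0) =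
    tscale c0^-1 (\sum_(1 <= j < i.+1) tens (f (X2 n j)) (Xm2 n j))
  + tscale (2 * c0)^-1
      (\sum_(1 <= j < i.+1) \sum_(j.+1 <= k < i.+1) tens (f (Xp n j k)) (Xnp n j k)).
Proof.
rewrite /omegabar tmaplD !tmapl_tscale !tmapl_sum.
congr (tscale _ _ + tscale _ _); apply: eq_bigr => j _; first exact: tmapl_tens.
by rewrite tmapl_sum; apply: eq_bigr => k _; exact: tmapl_tens.
Qed.

Lemma tmapl_omegabar_12 i c0 :
    (2 <= i)%N ->
    (forall j, (3 <= j <= i)%N -> f (X2 n j) = 0) ->
    (forall j k, (3 <= j)%N -> (j < k <= i)%N -> f (Xp n j k) = 0) ->
  tmapl f (omegabar n i c0) =
    tscale c0^-1 (tens (f (X2 n 1)) (Xm2 n 1) + tens (f (X2 n 2)) (Xm2 n 2))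
  + tscale (2 * c0)^-1
      (tens (f (Xp n 1 2)) (Xnp n 1 2)
       + \sum_(3 <= k < i.+1) tens (f (Xp n 1 k)) (Xnp n 1 k)
       + \sum_(3 <= k < i.+1) tens (f (Xp n 2 k)) (Xnp n 2 k)).
Proof.
move=> i_ge2 fX2 fXp; rewrite tmapl_omegabar.
have high_X2 : \sum_(3 <= j < i.+1) tens (f (X2 n j)) (Xm2 n j) = 0.
  by rewrite big_nat big1 // => j j_in; rewrite fX2 ?tens0l //; lia.
have high_Xp : \sum_(3 <= j < i.+1) \sum_(j.+1 <= k < i.+1)
    tens (f (Xp n j k)) (Xnp n j k) = 0.
  rewrite big_nat big1 // => j j_in; rewrite big_nat big1 // => k k_in.
  by rewrite fXp ?tens0l //; lia.
have [lt1i lt2i] : (1 < i.+1)%N /\ (2 < i.+1)%N by lia.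
rewrite big_ltn // big_ltn // high_X2 addr0.
by rewrite big_ltn // big_ltn // high_Xp addr0 big_ltn // addrA.
Qed.

End Tensors.

Section Projection.
Variables (n i : nat) (p : 'M[algC]_(n + n) -> 'M[algC]_(n + n)).
Hypotheses (i_ge2 : (2 <= i)%N) (i_lt_n : (i < n)%N) (p_pr : is_pr_lgamma i p).

HB.instance Definition _ := GRing.isLinear.Build algC _ _ _ p p_pr.1.

Let Y := Xnp n 1 i.+1 + Xd n i.+1 2.

Lemma pr_ad2_X2_1 : p (ad Y (ad Y (X2 n 1))) = Xd n 1 2.
Proof.
have [_ [_ [p_Xd [_ [_ [_ [_ [p_X2 _]]]]]]]] := p_pr.
have [_ p_Xm2] : p (X2 n i.+1) = 0 /\ p (Xm2 n i.+1) = 0 by apply: p_X2; lia.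
by rewrite ad2_X2_1 // linearB linearMn /= p_Xm2 mul0rn subr0 p_Xd //; lia.
Qed.

Lemma pr_ad2_X2_2 : p (ad Y (ad Y (X2 n 2))) = - Xd n 2 1.
Proof.
have [_ [_ [p_Xd [_ [_ [_ [_ [p_X2 _]]]]]]]] := p_pr.
have [p_X2i _] : p (X2 n i.+1) = 0 /\ p (Xm2 n i.+1) = 0 by apply: p_X2; lia.
by rewrite ad2_X2_2 // linearB linearMn /= p_X2i mul0rn sub0r p_Xd //; lia.
Qed.

Lemma pr_ad2_Xp_12 : p (ad Y (ad Y (Xp n 1 2))) = - Hd n 1 2.
Proof.
have [_ [p_Hd [_ [_ [p_hc _]]]]] := p_pr.
rewrite ad2_Xp_12 // linearB linearN linearMn /=.
by rewrite p_Hd ?p_hc ?mul0rn ?subr0 //; lia.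
Qed.

Lemma pr_ad2_Xp_1k k : (3 <= k <= i)%N -> p (ad Y (ad Y (Xp n 1 k))) = Xd n k 2.
Proof.
have [_ [_ [p_Xd _]]] := p_pr.
by move=> k_in; rewrite ad2_Xp_1k // p_Xd //; lia.
Qed.

Lemma pr_ad2_Xp_2k k : (3 <= k <= i)%N -> p (ad Y (ad Y (Xp n 2 k))) = - Xd n k 1.
Proof.
have [_ [_ [p_Xd _]]] := p_pr.
by move=> k_in; rewrite ad2_Xp_2k // linearN /= p_Xd //; lia.
Qed.

Lemma pr_tau2bar c0 :
  tmapl p (tau2bar i c0 Y) =
    tscale 2^-1
      (tscale c0^-1 (tens (Xd n 1 2) (Xm2 n 1) - tens (Xd n 2 1) (Xm2 n 2))
     + tscale (2 * c0)^-1
         (- tens (Hd n 1 2) (Xnp n 1 2)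
          + \sum_(3 <= k < i.+1) tens (Xd n k 2) (Xnp n 1 k)
          - \sum_(3 <= k < i.+1) tens (Xd n k 1) (Xnp n 2 k))).
Proof.
rewrite /tau2bar tmapl_tscale tmapl_comp.
rewrite (@tmapl_omegabar_12 _ (p \o ad Y \o ad Y)) //; last first.
- by move=> j k j_ge3 jk_in; rewrite /= ad_Xp_high // !linear0.
- by move=> j j_in; rewrite /= ad_X2_high // !linear0.
(* expose the composite linear map as [p (ad Y (ad Y _))] *)
rewrite -[GRing.Linear.sort _]/(fun A => p (ad Y (ad Y A))); cbv beta.
have sum_1k : \sum_(3 <= k < i.+1) tens (p (ad Y (ad Y (Xp n 1 k)))) (Xnp n 1 k)
              = \sum_(3 <= k < i.+1) tens (Xd n k 2) (Xnp n 1 k).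
  by apply: eq_big_nat => k k_range; rewrite pr_ad2_Xp_1k //; lia.
have sum_2k : \sum_(3 <= k < i.+1) tens (p (ad Y (ad Y (Xp n 2 k)))) (Xnp n 2 k)
              = - \sum_(3 <= k < i.+1) tens (Xd n k 1) (Xnp n 2 k).
  rewrite -sumrN; apply: eq_big_nat => k k_range.
  by rewrite pr_ad2_Xp_2k ?tensNl //; lia.
by rewrite pr_ad2_X2_1 pr_ad2_X2_2 pr_ad2_Xp_12 sum_1k sum_2k !tensNl.
Qed.

End Projection.

Theorem lemma5p5 (n i : nat) (c0 : algC) (p : 'M[algC]_(n + n) -> 'M[algC]_(n + n)) :
  (3 <= n)%N -> (2 <= i <= n.-1)%N -> 0 < c0 ->
  is_pr_lgamma i p ->
  let a := (i.+1)%:R : algC in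
  let Y := Xnp n 1 i.+1 + Xd n i.+1 2 in
  tscale (8 * c0 ^+ 2 / a) (tmapl p (tau2bar i c0 Y)) =
    tscale (4 * c0 / a) (tens (Xd n 1 2) (Xm2 n 1))
  - tscale (4 * c0 / a) (tens (Xd n 2 1) (Xm2 n 2))
  + tscale (2 * c0 / a) (\sum_(3 <= k < i.+1) tens (Xd n k 2) (Xnp n 1 k))
  - tscale (2 * c0 / a) (\sum_(3 <= k < i.+1) tens (Xd n k 1) (Xnp n 2 k))
  - tscale (2 * c0 / a) (tens (Hd n 1 2) (Xnp n 1 2)).
Proof.
move=> _ /andP[i_ge2 i_le] c0_gt0 p_pr a Y.
have i_lt_n : (i < n)%N by lia.
rewrite pr_tau2bar //.
have c0_neq0 : c0 != 0 by rewrite gt_eqF.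
apply/matrixP => r s; apply/matrixP => u v; rewrite !(mxE, summxE).
by field; rewrite c0_neq0 andbT addrC natr1 pnatr_eq0.
Qed.
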